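(* Let $x,x'$ be two adjacent vertices of a graph $G$ and let $y,y'$ be two adjacent vertices of a graph $H$, where $G$ and $H$ are connected. If $X$ is a $\mu_t(G\,\Box\,H)$-set and $(x,y)\in X$, then $(x',y')\notin X$.
   Context: All graphs are finite, simple and undirected. The Cartesian product $G\,\Box\,H$ has vertex set $V(G)\times V(H)$, with $(x,y)$ adjacent to $(x',y')$ iff either $x=x'$ and $yy'\in E(H)$, or $xx'\in E(G)$ and $y=y'$. Let $F$ be a connected graph and $X\subseteq V(F)$. Two vertices $u,v\in V(F)$ are $X$-visible if there exists a shortest $u,v$-path in $F$ none of whose internal vertices belongs to $X$. $X$ is a total mutual-visibility set of $F$ if every two vertices of $F$ are $X$-visible (the empty set is allowed). $\mu_t(F)$ is the maximum cardinality of a total mutual-visibility set of $F$, and a $\mu_t(F)$-set is a total mutual-visibility set of that cardinality. *)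

From mathcomp Require Import all_boot.
Set Implicit Arguments. Unset Strict Implicit. Unset Printing Implicit Defensive.

Definition simple_graph (T : finType) (e : rel T) : Prop :=
  symmetric e /\ irreflexive e.

Definition connected_graph (T : finType) (e : rel T) : Prop :=
  forall u v : T, connect e u v.

Definition cart_prod (T1 T2 : finType) (e1 : rel T1) (e2 : rel T2) : rel (T1 * T2) :=
  fun a b => ((a.1 == b.1) && e2 a.2 b.2) || (e1 a.1 b.1 && (a.2 == b.2)).

(* A u,v-walk is encoded as the sequence p of vertices after u, so the
   walk is u :: p, it ends at last u p and has length size p. *)
Definition is_walk (T : finType) (e : rel T) (u v : T) (p : seq T) : bool :=
  path e u p && (last u p == v).

Definition shortest_path (T : finType) (e : rel T) (u v : T) (p : seq T) : Prop :=
  is_walk e u v p /\ forall q : seq T, is_walk e u v q -> size p <= size q.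

(* Internal vertices of the walk u :: p are the vertices of belast u p except u,
   i.e. the vertices of p except the last one. *)
Definition internal (T : finType) (u : T) (p : seq T) : seq T := behead (belast u p).

Definition visible (T : finType) (e : rel T) (X : {set T}) (u v : T) : Prop :=
  exists p : seq T, shortest_path e u v p /\ forall w, w \in internal u p -> w \notin X.

Definition total_mutual_visibility (T : finType) (e : rel T) (X : {set T}) : Prop :=
  forall u v : T, visible e X u v.

Definition mu_t_set (T : finType) (e : rel T) (X : {set T}) : Prop :=
  total_mutual_visibility e X /\
  forall Y : {set T}, total_mutual_visibility e Y -> #|Y| <= #|X|.

From mathcomp Require Import all_boot.
Set Implicit Arguments. Unset Strict Implicit. Unset Printing Implicit Defensive.

(* In G □ H the vertices (x,y') and (x',y) are at distance 2, and their only
   common neighbours are (x,y) and (x',y'). A shortest path between them thus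
   has a single internal vertex, one of these two; so they cannot both lie in a
   total mutual-visibility set. *)

Lemma visible_common_neighbour (T : finType) (e : rel T) (X : {set T}) (u w0 v : T) :
  e u w0 -> e w0 v -> u != v -> ~~ e u v -> visible e X u v ->
  exists2 w, e u w && e w v & w \notin X.
Proof.
move=> euw0 ew0v neq_uv nadj_uv [p [[walk_p min_p] int_p]].
have : size p <= 2 by apply: (min_p [:: w0; v]); rewrite /is_walk /= euw0 ew0v eqxx.
move: walk_p int_p {min_p}; rewrite /is_walk.
case: p => [|w1 [|w2 [|? ?]]] //=.
- by rewrite (negbTE neq_uv).
- by rewrite andbT => /andP[euw1 /eqP w1v]; rewrite -w1v euw1 in nadj_uv.
- move=> /andP[/and3P[euw1 ew1w2 _] /eqP w2v] int_p _; subst w2.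
  by exists w1; [rewrite euw1 | apply: int_p; rewrite mem_seq1].
Qed.

Lemma cart_prod_common_neighbour (T1 T2 : finType) (e1 : rel T1) (e2 : rel T2)
    (x x' : T1) (y y' : T2) (w : T1 * T2) :
  x != x' -> y != y' ->
  cart_prod e1 e2 (x, y') w -> cart_prod e1 e2 w (x', y) ->
  w = (x, y) \/ w = (x', y').
Proof.
case: w => a b neq_x neq_y; rewrite /cart_prod /=.
case/orP=> [/andP[/eqP <- _] | /andP[_ /eqP <-]];
  case/orP=> [/andP[/eqP xa _] | /andP[_ /eqP by_]];
  by [rewrite xa eqxx in neq_x | rewrite by_ eqxx in neq_y | left; congr pair
     | right; congr pair].
Qed.

Theorem lemma5p8 (T1 T2 : finType) (e1 : rel T1) (e2 : rel T2)
  (x x' : T1) (y y' : T2) (X : {set T1 * T2}) :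
  simple_graph e1 -> simple_graph e2 ->
  connected_graph e1 -> connected_graph e2 ->
  e1 x x' -> e2 y y' ->
  mu_t_set (cart_prod e1 e2) X ->
  (x, y) \in X -> (x', y') \notin X.
Proof.
move=> [_ irr1] [sym2 irr2] _ _ exx' eyy' [tmv_X _] Xxy.
apply/negP => Xx'y'.
have neq_x : x != x' by apply: contraTneq exx' => <-; rewrite irr1.
have neq_y : y != y' by apply: contraTneq eyy' => <-; rewrite irr2.
have [w /andP[ew1 ew2] Xw] :
    exists2 w, cart_prod e1 e2 (x, y') w && cart_prod e1 e2 w (x', y) & w \notin X.
  apply: (visible_common_neighbour (w0 := (x, y))) (tmv_X _ _).
  - by rewrite /cart_prod /= eqxx sym2 eyy'.
  - by rewrite /cart_prod /= exx' eqxx orbT.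
  - by rewrite xpair_eqE negb_and neq_x.
  - by rewrite /cart_prod /= (negbTE neq_x) eq_sym (negbTE neq_y) andbF.
by case: (cart_prod_common_neighbour neq_x neq_y ew1 ew2) Xw => ->; rewrite ?Xxy ?Xx'y'.
Qed.
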